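(* Consider an MDP $(\mathcal{S},\mathcal{A},\tau,\mu_0,R_1,\gamma)$ and alternative transition dynamics $\tau':\mathcal{S}\times\mathcal{A}\to\Delta(\mathcal{S})$. Then for any function $\mathcal{L}:\mathcal{S}\times\mathcal{A}\to\mathbb{R}$ there exists a reward function $R_2:\mathcal{S}\times\mathcal{A}\times\mathcal{S}\to\mathbb{R}$ such that $\mathbb{E}_{S'\sim\tau(s,a)}[R_2(s,a,S')]=\mathbb{E}_{S'\sim\tau(s,a)}[R_1(s,a,S')]$ for all $s\in\mathcal{S},a\in\mathcal{A}$ (i.e. $R_2$ is produced from $R_1$ by $S'$-redistribution under $\tau$), and $\mathbb{E}_{S'\sim\tau'(s,a)}[R_2(s,a,S')]=\mathcal{L}(s,a)$ for all $(s,a)$ with $\tau(s,a)\neq\tau'(s,a)$.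
   Context: An MDP is $(\mathcal{S},\mathcal{A},\tau,\mu_0,R,\gamma)$ with finite state set $\mathcal{S}$, finite action set $\mathcal{A}$, transition dynamics $\tau:\mathcal{S}\times\mathcal{A}\to\Delta(\mathcal{S})$, initial distribution $\mu_0\in\Delta(\mathcal{S})$, reward $R:\mathcal{S}\times\mathcal{A}\times\mathcal{S}\to\mathbb{R}$, and $\gamma\in(0,1)$. *)

From HB Require Import structures.
From mathcomp Require Import all_boot all_order all_algebra.
From mathcomp Require Import reals.
Set Implicit Arguments. Unset Strict Implicit. Unset Printing Implicit Defensive.
Import Order.TTheory GRing.Theory Num.Theory.
Local Open Scope ring_scope.

Definition is_distr (R : realType) (T : finType) (p : {ffun T -> R}) : Prop :=
  (forall t, 0 <= p t) /\ \sum_(t : T) p t = 1.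

Definition is_transition (R : realType) (S A : finType)
  (tau : S -> A -> {ffun S -> R}) : Prop :=
  forall s a, is_distr (tau s a).

Definition expect_next (R : realType) (S A : finType)
  (tau : S -> A -> {ffun S -> R}) (Rw : S -> A -> S -> R) (s : S) (a : A) : R :=
  \sum_(s' : S) tau s a s' * Rw s a s'.

(* Adding to R1 a multiple of a reward that is centred under tau(s,a) leaves
   its tau-expectation unchanged.  Take the difference d = tau'(s,a) - tau(s,a)
   and centre it under tau(s,a): its expectation under tau'(s,a) is then
   E_tau'[d] - E_tau[d] = sum d^2, which is nonzero exactly when the two
   distributions differ, so a suitable multiple moves the tau'-expectation to
   any prescribed value L(s,a). *)
From HB Require Import structures.
From mathcomp Require Import all_boot all_order all_algebra.
From mathcomp Require Import reals.
From mathcomp Require Import ring.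
Set Implicit Arguments. Unset Strict Implicit. Unset Printing Implicit Defensive.
Import Order.TTheory GRing.Theory Num.Theory.
Local Open Scope ring_scope.

Section Redistribution.

Variables (R : realFieldType) (T : finType).
Implicit Types (p q : T -> R) (f g : T -> R).

Definition expect p f : R := \sum_t p t * f t.

Definition center p f : T -> R := fun t => f t - expect p f.

Definition separator p q : T -> R :=
  fun t => center p (fun x => q x - p x) t / \sum_x (q x - p x) ^+ 2.

Definition redistribute p q g (l : R) : T -> R :=
  fun t => g t + (l - expect q g) * separator p q t.

Lemma expect_addr_scale p f g (c : R) :
  expect p (fun t => f t + c * g t) = expect p f + c * expect p g.
Proof.
rewrite /expect mulr_sumr -big_split /=.
by apply: eq_bigr => t _; rewrite mulrDr mulrCA.
Qed.

Lemma expect_center p q f : \sum_t q t = 1 ->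
  expect q (center p f) = expect q f - expect p f.
Proof.
move=> q1; rewrite /expect /center.
under eq_bigr => t _ do rewrite mulrBr.
by rewrite sumrB -mulr_suml q1 mul1r.
Qed.

Lemma expect_diff_center p q : \sum_t q t = 1 ->
  expect q (center p (fun x => q x - p x)) = \sum_x (q x - p x) ^+ 2.
Proof.
move=> q1; rewrite expect_center // /expect -sumrB.
by apply: eq_bigr => t _; ring.
Qed.

Lemma sum_sqr_diff_eq0 p q : \sum_x (q x - p x) ^+ 2 = 0 -> p =1 q.
Proof.
move=> sum0 x; apply/eqP; rewrite eq_sym -subr_eq0 -sqrf_eq0.
by apply/eqP; apply: (psumr_eq0P _ sum0) => // y _; exact: sqr_ge0.
Qed.

Lemma expect_separator_self p q : \sum_t p t = 1 ->
  expect p (separator p q) = 0.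
Proof.
move=> p1; rewrite /expect /separator.
under eq_bigr => t _ do rewrite mulrA.
by rewrite -mulr_suml [X in X / _]expect_center // subrr mul0r.
Qed.

Lemma expect_separator_other p q : \sum_t q t = 1 -> ~ p =1 q ->
  expect q (separator p q) = 1.
Proof.
move=> q1 pNq; rewrite /expect /separator.
under eq_bigr => t _ do rewrite mulrA.
rewrite -mulr_suml [X in X / _]expect_diff_center // divff //.
by apply/eqP => /sum_sqr_diff_eq0.
Qed.

Lemma expect_redistribute_self p q g l : \sum_t p t = 1 ->
  expect p (redistribute p q g l) = expect p g.
Proof.
by move=> p1; rewrite expect_addr_scale expect_separator_self // mulr0 addr0.
Qed.

Lemma expect_redistribute_other p q g l : \sum_t q t = 1 -> ~ p =1 q ->
  expect q (redistribute p q g l) = l.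
Proof.
move=> q1 pNq; rewrite expect_addr_scale expect_separator_other // mulr1.
by rewrite addrC subrK.
Qed.

End Redistribution.

Theorem theorem4p1 (R : realType) (S A : finType)
  (tau : S -> A -> {ffun S -> R}) (mu0 : {ffun S -> R})
  (R1 : S -> A -> S -> R) (gamma : R)
  (Htau : is_transition tau) (Hmu0 : is_distr mu0)
  (Hgamma : 0 < gamma < 1)
  (tau' : S -> A -> {ffun S -> R}) (Htau' : is_transition tau')
  (L : S -> A -> R) :
  exists R2 : S -> A -> S -> R,
    (forall s a, expect_next tau R2 s a = expect_next tau R1 s a) /\
    (forall s a, tau s a <> tau' s a -> expect_next tau' R2 s a = L s a).
Proof.
exists (fun s a => redistribute (tau s a) (tau' s a) (R1 s a) (L s a)).
split=> s a.
  by apply: expect_redistribute_self; case: (Htau s a).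
move=> tauNtau'; apply: expect_redistribute_other; first by case: (Htau' s a).
by move/ffunP.
Qed.
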